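(* Consider the scheme described in the context, with $\mu_f,\mu_{g^*}\ge0$ valid strong convexity moduli of $f$ and $g^*$, and let $k\ge1$. Suppose $\tau_{k-1},\tau_k\in(0,1]$ satisfy $$\begin{cases}(L_{k-1}+\mu_f)(1-\tau_k)\tau_{k-1}^2+\mu_f(1-\tau_k)\tau_k\ \ge\ L_k\tau_k^2,\\ (L_{k-1}+\mu_f)(L_k+\mu_f)\tau_k\tau_{k-1}^2+(L_k+\mu_f)^2\tau_k^2\ \ge\ (L_{k-1}+\mu_f)L_k\tau_{k-1}^2.\end{cases}$$ Then for every $x\in\mathrm{dom} f$, $\mathcal{V}_{k+1}(x)\le(1-\tau_k)\mathcal{V}_k(x)$.
   Context: Setting: $f:\mathbb{R}^p\to\mathbb{R}\cup\{+\infty\}$, $g:\mathbb{R}^n\to\mathbb{R}\cup\{+\infty\}$ proper closed convex, $K\in\mathbb{R}^{n\times p}$ with $K\neq0$, $\|K\|$ its operator (spectral) norm; $g^*$ Fenchel conjugate of $g$; $\mathcal{L}(x,y):=f(x)+\langle Kx,y\rangle-g^*(y)$. $f$ is $\mu_f$-strongly convex means $f-\tfrac{\mu_f}{2}\|\cdot\|^2$ is convex ($\mu_f=0$ allowed); similarly for $g^*$ with $\mu_{g^*}$. $\mathrm{prox}_{\gamma h}(x):=\arg\min_z\{h(z)+\tfrac1{2\gamma}\|z-x\|^2\}$. For $\beta>0$: $g_\beta(u,\dot y):=\max_y\{\langle u,y\rangle-g^*(y)-\tfrac\beta2\|y-\dot y\|^2\}$ and $F_\beta(x,\dot y):=f(x)+g_\beta(Kx,\dot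 y)$. Scheme: given $x^0\in\mathrm{dom} f$, $\tilde y^0\in\mathrm{dom}\,g^*$, $\dot y\in\mathbb{R}^n$, $\beta_0>0$, and a sequence $\{\tau_k\}_{k\ge0}\subset(0,1]$, set $\hat x^0:=x^0$, $\beta_k:=\beta_{k-1}/(1+\tau_k)$ for $k\ge1$, $L_k:=\|K\|^2/(\beta_k+\mu_{g^*})$, $m_{k+1}:=(L_{k+1}+\mu_f)/(L_k+\mu_f)$, $\eta_{k+1}:=\frac{(1-\tau_k)\tau_k}{\tau_k^2+m_{k+1}\tau_{k+1}}$, and for $k\ge0$: $y^{k+1}:=\mathrm{prox}_{g^*/\beta_k}(\dot y+\tfrac1{\beta_k}K\hat x^k)$, $x^{k+1}:=\mathrm{prox}_{f/L_k}(\hat x^k-\tfrac1{L_k}K^\top y^{k+1})$, $\hat x^{k+1}:=x^{k+1}+\eta_{k+1}(x^{k+1}-x^k)$, $\tilde y^{k+1}:=(1-\tau_k)\tilde y^k+\tau_k y^{k+1}$. Lyapunov function, for $k\ge1$ and $x\in\mathrm{dom} f$: $\mathcal{V}_k(x):=F_{\beta_{k-1}}(x^k,\dot y)-\mathcal{L}(x,\tilde y^k)+\tfrac{(L_{k-1}+\mu_f)\tau_{k-1}^2}{2}\big\|\tfrac1{\tau_{k-1}}[x^k-(1-\tau_{k-1})x^{k-1}]-x\big\|^2$. *)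

From HB Require Import structures.
From mathcomp Require Import all_boot all_order all_algebra.
From mathcomp Require Import classical_sets boolp reals constructive_ereal ereal.
Set Implicit Arguments. Unset Strict Implicit. Unset Printing Implicit Defensive.
Import Order.TTheory GRing.Theory Num.Theory.
Local Open Scope ring_scope.
Local Open Scope classical_set_scope.

Section Defs.
Variable R : realType.

Definition dotp (d : nat) (u v : 'cV[R]_d) : R := \sum_(i < d) u i ord0 * v i ord0.
Definition nsq (d : nat) (u : 'cV[R]_d) : R := dotp u u.

Definition edom (d : nat) (h : 'cV[R]_d -> \bar R) : set 'cV[R]_d :=
  [set x | (h x < +oo)%E].

Definition properf (d : nat) (h : 'cV[R]_d -> \bar R) : Prop :=
  (exists x, (h x < +oo)%E) /\ (forall x, (-oo < h x)%E).

Definition lscf (d : nat) (h : 'cV[R]_d -> \bar R) : Prop :=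
  forall (x : 'cV[R]_d) (a : R), (a%:E < h x)%E ->
    exists e : R, 0 < e /\ forall z, nsq (z - x) < e -> (a%:E < h z)%E.

Definition convexf (d : nat) (h : 'cV[R]_d -> \bar R) : Prop :=
  forall (x z : 'cV[R]_d) (l : R), 0 < l < 1 ->
    (h (l *: x + (1 - l) *: z)%R <= l%:E * h x + (1 - l)%:E * h z)%E.

Definition strongly_convexf (d : nat) (mu : R) (h : 'cV[R]_d -> \bar R) : Prop :=
  convexf (fun x => (h x - (mu / 2 * nsq x)%:E)%E).

Definition fconj (d : nat) (g : 'cV[R]_d -> \bar R) (y : 'cV[R]_d) : \bar R :=
  ereal_sup (range (fun u : 'cV[R]_d => ((dotp u y)%:E - g u)%E)).

Definition is_opnorm (n p : nat) (K : 'M[R]_(n, p)) (c : R) : Prop :=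
  0 <= c /\ (forall x : 'cV[R]_p, nsq (K *m x) <= c ^+ 2 * nsq x) /\
  (forall c', 0 <= c' -> (forall x : 'cV[R]_p, nsq (K *m x) <= c' ^+ 2 * nsq x) -> c <= c').

Definition is_prox (d : nat) (h : 'cV[R]_d -> \bar R) (gam : R) (v z : 'cV[R]_d) : Prop :=
  forall w : 'cV[R]_d,
    (h z + ((2 * gam)^-1 * nsq (z - v))%:E <= h w + ((2 * gam)^-1 * nsq (w - v))%:E)%E.

Definition lagr (n p : nat) (f : 'cV[R]_p -> \bar R) (g : 'cV[R]_n -> \bar R)
  (K : 'M[R]_(n, p)) (x : 'cV[R]_p) (y : 'cV[R]_n) : \bar R :=
  (f x + (dotp (K *m x) y)%:E - fconj g y)%E.

Definition gbeta (n : nat) (g : 'cV[R]_n -> \bar R) (b : R) (u yd : 'cV[R]_n) : \bar R :=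
  ereal_sup (range (fun y : 'cV[R]_n =>
    ((dotp u y)%:E - fconj g y - (b / 2 * nsq (y - yd))%:E)%E)).

Definition Fbeta (n p : nat) (f : 'cV[R]_p -> \bar R) (g : 'cV[R]_n -> \bar R)
  (K : 'M[R]_(n, p)) (b : R) (x : 'cV[R]_p) (yd : 'cV[R]_n) : \bar R :=
  (f x + gbeta g b (K *m x) yd)%E.

Fixpoint betak (b0 : R) (tau : nat -> R) (k : nat) : R :=
  match k with
  | 0 => b0
  | k'.+1 => betak b0 tau k' / (1 + tau k'.+1)
  end.

Definition Lk (nK mug b0 : R) (tau : nat -> R) (k : nat) : R :=
  nK ^+ 2 / (betak b0 tau k + mug).

Definition m_next (nK muf mug b0 : R) (tau : nat -> R) (k : nat) : R :=
  (Lk nK mug b0 tau k.+1 + muf) / (Lk nK mug b0 tau k + muf).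

Definition eta_next (nK muf mug b0 : R) (tau : nat -> R) (k : nat) : R :=
  (1 - tau k) * tau k / (tau k ^+ 2 + m_next nK muf mug b0 tau k * tau k.+1).

(* Lyapunov function V_k(x), meaningful for k >= 1. *)
Definition Vly (n p : nat) (f : 'cV[R]_p -> \bar R) (g : 'cV[R]_n -> \bar R)
  (K : 'M[R]_(n, p)) (nK muf mug b0 : R) (tau : nat -> R) (yd : 'cV[R]_n)
  (x : nat -> 'cV[R]_p) (yt : nat -> 'cV[R]_n) (k : nat) (xx : 'cV[R]_p) : \bar R :=
  (Fbeta f g K (betak b0 tau k.-1) (x k) yd - lagr f g K xx (yt k)
   + ((Lk nK mug b0 tau k.-1 + muf) * tau k.-1 ^+ 2 / 2 *
      nsq ((tau k.-1)^-1 *: (x k - (1 - tau k.-1) *: x k.-1) - xx))%:E)%E.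

End Defs.

From HB Require Import structures.
From mathcomp Require Import all_boot all_order all_algebra.
From mathcomp Require Import classical_sets boolp reals constructive_ereal ereal.
From mathcomp Require Import ring lra.
Import Order.TTheory GRing.Theory Num.Theory.
Set Implicit Arguments. Unset Strict Implicit. Unset Printing Implicit Defensive.
Local Open Scope ring_scope.

(* All values involved are finite (prox points of proper functions, convex
   combinations of finite points, and g_beta squeezed between two finite
   bounds), so V_k and V_(k+1) are real numbers and the claim is a real
   inequality.  It is the sum of the following estimates, with
   w = tau_k x + (1 - tau_k) x^k as comparison point:
   - dual step: u |-> g_beta(u, ydot) is smooth with curvature
     1/(beta + mu_g) (mu_g the modulus of g^* ), and ||K||^2/(beta_k + mu_g)
     = L_k (descent lemma [gbeta_descent]);
     y^(k+1) is a competitor in the max defining g_(beta_(k-1)) ([gbeta_ge]);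
   - primal step: three-point inequality of the proximal-gradient step
     ([prox_grad_step], from the prox inequality [prox_three_point]);
   - strong convexity of f at w and convexity of g^* along ytilde;
   - momentum: the two scalar conditions make a 2x2 quadratic form
     positive semidefinite, which bounds L_k/2 |w - xhat^k|^2
     ([momentum_estimate]);
   - beta_k >= (1 - tau_k) beta_(k-1). *)

Section InnerProduct.
Variables (R : realType) (d : nat).
Implicit Types u v w : 'cV[R]_d.

Lemma dotpC u v : dotp u v = dotp v u.
Proof. by apply: eq_bigr => i _; rewrite mulrC. Qed.

Lemma dotpDl u v w : dotp (u + v) w = dotp u w + dotp v w.
Proof. by rewrite /dotp -big_split; apply: eq_bigr => i _; rewrite !mxE mulrDl. Qed.

Lemma dotpZl a u v : dotp (a *: u) v = a * dotp u v.
Proof. by rewrite /dotp mulr_sumr; apply: eq_bigr => i _; rewrite !mxE mulrA. Qed.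

Lemma dotpNl u v : dotp (- u) v = - dotp u v.
Proof. by rewrite -scaleN1r dotpZl mulN1r. Qed.

Lemma dotpBl u v w : dotp (u - v) w = dotp u w - dotp v w.
Proof. by rewrite dotpDl dotpNl. Qed.

Lemma dotpDr u v w : dotp w (u + v) = dotp w u + dotp w v.
Proof. by rewrite dotpC dotpDl !(dotpC w). Qed.

Lemma dotpZr a u v : dotp v (a *: u) = a * dotp v u.
Proof. by rewrite dotpC dotpZl dotpC. Qed.

Lemma dotpNr u v : dotp v (- u) = - dotp v u.
Proof. by rewrite dotpC dotpNl dotpC. Qed.

Lemma dotpBr u v w : dotp w (u - v) = dotp w u - dotp w v.
Proof. by rewrite dotpDr dotpNr. Qed.

Lemma nsq_ge0 u : 0 <= nsq u.
Proof. by apply: sumr_ge0 => i _; rewrite -expr2 sqr_ge0. Qed.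

Lemma nsqD u v : nsq (u + v) = nsq u + 2 * dotp u v + nsq v.
Proof. by rewrite /nsq dotpDl !dotpDr (dotpC v u); ring. Qed.

Lemma nsqZ a u : nsq (a *: u) = a ^+ 2 * nsq u.
Proof. by rewrite /nsq dotpZl dotpZr mulrA expr2. Qed.

Lemma nsqN u : nsq (- u) = nsq u.
Proof. by rewrite /nsq dotpNl dotpNr opprK. Qed.

Lemma nsq_ge_coord v i : v i ord0 ^+ 2 <= nsq v.
Proof.
rewrite /nsq /dotp (bigD1 i) //= -expr2 lerDl.
by apply: sumr_ge0 => l _; rewrite -expr2 sqr_ge0.
Qed.

End InnerProduct.

Lemma dotp_mulmx (R : realType) n p (K : 'M[R]_(n, p)) u v :
  dotp (K *m u) v = dotp u (K^T *m v).
Proof.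
have dotp_mx d (a b : 'cV[R]_d) : dotp a b = (a^T *m b) ord0 ord0.
  by rewrite /dotp !mxE; apply: eq_bigr => i _; rewrite !mxE.
by rewrite !dotp_mx trmx_mul mulmxA.
Qed.

Section Convexity.
Variables (R : realType) (d : nat).
Implicit Types w z : 'cV[R]_d.

Lemma nsq_convex_comb l w z : nsq (l *: w + (1 - l) *: z) =
  l * nsq w + (1 - l) * nsq z - l * (1 - l) * nsq (w - z).
Proof. by rewrite (nsqD (l *: w)) !nsqZ dotpZl dotpZr (nsqD w) nsqN dotpNr; ring. Qed.

Lemma strong_convex_ineq (h : 'cV[R]_d -> \bar R) mu w z l hw hz :
  strongly_convexf mu h -> 0 < l <= 1 -> h w = hw%:E -> h z = hz%:E ->
  (h (l *: w + (1 - l) *: z)%R <=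
     (l * hw + (1 - l) * hz - mu / 2 * (l * (1 - l)) * nsq (w - z))%:E)%E.
Proof.
move=> hsc /andP[l0 l1] hwE hzE.
have [->|l_neq1] := eqVneq l 1.
  by rewrite subrr scale0r addr0 scale1r hwE lee_fin; lra.
have l1' : l < 1 by rewrite lt_neqAle l_neq1.
have := hsc w z l; rewrite l0 l1' => /(_ isT); rewrite hwE hzE.
rewrite -!EFinB -!EFinM -EFinD nsq_convex_comb.
case: (h _) => [r| |] //=; last by move=> _; rewrite leNye.
by rewrite !lee_fin => ?; lra.
Qed.

Lemma convex_ineq (h : 'cV[R]_d -> \bar R) mu w z l hw hz :
  0 <= mu -> strongly_convexf mu h -> 0 < l <= 1 -> h w = hw%:E -> h z = hz%:E ->
  (h (l *: w + (1 - l) *: z)%R <= (l * hw + (1 - l) * hz)%:E)%E.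
Proof.
move=> mu0 hsc hl hwE hzE; apply: le_trans (strong_convex_ineq hsc hl hwE hzE) _.
case/andP: hl => l0 l1; rewrite lee_fin lerBlDr lerDl.
by rewrite !mulr_ge0 ?nsq_ge0 ?divr_ge0 ?subr_ge0 // ltW.
Qed.

End Convexity.

Lemma le0_of_le_scaled (R : realFieldType) (X C : R) :
  0 <= C -> (forall l, 0 < l <= 1 -> X <= l * C) -> X <= 0.
Proof.
move=> C0 hX; rewrite leNgt; apply/negP => X0.
have CX0 : 0 < C + X by lra.
have /hX : 0 < X / (C + X) <= 1 by rewrite divr_gt0 //= ler_pdivrMr // mul1r lerDr.
rewrite mulrAC ler_pdivlMr // => ?; nra.
Qed.

Section Prox.
Variables (R : realType) (d : nat).
Implicit Types v w z : 'cV[R]_d.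

Lemma prox_gtNy (h : 'cV[R]_d -> \bar R) gam v z hz :
  is_prox h gam v z -> h z = hz%:E -> forall w, (-oo < h w)%E.
Proof.
move=> hp hzE w; have := hp w; rewrite hzE.
by case: (h w) => [r| |] //= _; exact: ltNyr.
Qed.

Lemma prox_fin (h : 'cV[R]_d -> \bar R) gam v z :
  properf h -> is_prox h gam v z -> exists r, h z = r%:E.
Proof.
move=> [[x0 hx0] hgtNy] hp; have := hp x0; have := hgtNy z.
case: (h x0) hx0 => [r0| |] // _; case: (h z) => [r| |] // _; by exists r.
Qed.

(* Comparing the prox point z with the points of the segment [z, w]. *)
Lemma prox_segment (h : 'cV[R]_d -> \bar R) mu gam v z w hz hw :
  strongly_convexf mu h -> is_prox h gam v z -> h z = hz%:E -> h w = hw%:E ->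
  forall l, 0 < l <= 1 ->
  hz + 2 * (2 * gam)^-1 * dotp (v - z) (w - z) + mu / 2 * nsq (w - z) - hw
    <= l * (((2 * gam)^-1 + mu / 2) * nsq (w - z)).
Proof.
move=> hsc hp hzE hwE l hl; have /andP[l0 _] := hl.
have hconv := strong_convex_ineq hsc hl hwE hzE.
have := hp (l *: w + (1 - l) *: z); rewrite hzE.
have -> : l *: w + (1 - l) *: z - v = (z - v) + l *: (w - z).
  by apply/matrixP => i j; rewrite !mxE; ring.
move: hconv; case: (h _) => [r| |] //=; rewrite !lee_fin => hr hmin.
have -> : dotp (v - z) (w - z) = - dotp (z - v) (w - z) by rewrite -dotpNl opprB.
rewrite -(ler_pM2l l0); move: hr hmin; rewrite (nsqD (z - v)) nsqZ dotpZr.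
move: (nsq (w - z)) (dotp (z - v) (w - z)) (nsq (z - v)) (2 * gam)^-1.
move=> N D V c hr hmin; lra.
Qed.

Lemma prox_three_point (h : 'cV[R]_d -> \bar R) mu gam v z w hz hw :
  0 <= mu -> 0 <= gam -> strongly_convexf mu h -> is_prox h gam v z ->
  h z = hz%:E -> h w = hw%:E ->
  hz + gam^-1 * dotp (v - z) (w - z) + mu / 2 * nsq (w - z) <= hw.
Proof.
move=> mu0 gam0 hsc hp hzE hwE; rewrite -subr_le0.
have <- : 2 * (2 * gam)^-1 = gam^-1 by rewrite invfM mulrA mulfV ?mul1r ?pnatr_eq0.
apply: (le0_of_le_scaled _ (prox_segment hsc hp hzE hwE)).
by rewrite mulr_ge0 ?nsq_ge0 // addr_ge0 ?divr_ge0 // invr_ge0 mulr_ge0.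
Qed.

Lemma prox_grad_step (h : 'cV[R]_d -> \bar R) mu L
    q xh x1 z h1 hz :
  0 <= mu -> 0 < L -> strongly_convexf mu h ->
  is_prox h L^-1 (xh - L^-1 *: q) x1 -> h x1 = h1%:E -> h z = hz%:E ->
  h1 + dotp q x1 + L / 2 * nsq (x1 - xh) + (L + mu) / 2 * nsq (z - x1)
    <= hz + dotp q z + L / 2 * nsq (z - xh).
Proof.
move=> mu0 L0 hsc hp h1E hzE.
have Linv0 : 0 <= L^-1 by rewrite invr_ge0 ltW.
have := prox_three_point mu0 Linv0 hsc hp h1E hzE; rewrite invrK.
have -> : xh - L^-1 *: q - x1 = (xh - x1) - L^-1 *: q by rewrite addrAC.
rewrite dotpBl dotpZl (dotpBr z x1 q) mulrBr mulrA mulfV ?gt_eqF // mul1r.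
have -> : dotp (xh - x1) (z - x1) = - dotp (z - x1) (x1 - xh).
  by rewrite dotpC -dotpNr opprB.
have -> : z - xh = (z - x1) + (x1 - xh) by rewrite addrA subrK.
rewrite (nsqD (z - x1)); lra.
Qed.

End Prox.

Lemma fin_num_le (R : realType) (e : \bar R) r :
  (-oo < e)%E -> (e <= r%:E)%E -> e \is a fin_num.
Proof. by move=> e_gtNy e_le; apply/fin_numPlt; rewrite e_gtNy (le_lt_trans e_le) ?ltry. Qed.

Lemma proper_fin_num (R : realType) d (h : 'cV[R]_d -> \bar R) v :
  properf h -> (h v < +oo)%E -> h v \is a fin_num.
Proof. by move=> [_ h_gtNy] hv; apply/fin_numPlt; rewrite h_gtNy hv. Qed.

Lemma fconj_gtNy (R : realType) n (g : 'cV[R]_n -> \bar R) y :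
  properf g -> (-oo < fconj g y)%E.
Proof.
case=> [[u0 gu0] g_gtNy]; have := g_gtNy u0.
case gu0E : (g u0) gu0 => [r| |] // _ _.
apply: (lt_le_trans (ltNyr (dotp u0 y - r))).
by apply: ereal_sup_ubound; exists u0 => //; rewrite gu0E EFinB.
Qed.

Section SmoothedConjugate.
Variables (R : realType) (n : nat).
Implicit Types u w y : 'cV[R]_n.

Lemma gbeta_ge (g : 'cV[R]_n -> \bar R) b u yd y :
  ((dotp u y)%:E - fconj g y - (b / 2 * nsq (y - yd))%:E <= gbeta g b u yd)%E.
Proof. by apply: ereal_sup_ubound; exists y. Qed.

Lemma young (s : R) w z : 0 < s -> dotp w z - s / 2 * nsq z <= (2 * s)^-1 * nsq w.
Proof.
move=> s0; have s2 : 0 < 2 * s by rewrite mulr_gt0.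
have := nsq_ge0 (w - s *: z); rewrite -scaleNr nsqD nsqZ dotpZr sqrrN => sq_ge0.
by rewrite -(ler_pM2l s2) [X in _ <= X]mulrA mulfV ?gt_eqF // mul1r; lra.
Qed.

(* Descent lemma for the smoothed function u |-> g_b(u, yd): if y0 is its
   maximizer at u (a prox point of g^* ), then g_b is majorized at u' by the
   quadratic with slope y0 and curvature 1 / (b + mug). *)
Lemma gbeta_descent (g : 'cV[R]_n -> \bar R) mug b u u' yd y0 gy :
  0 < b -> 0 <= mug -> strongly_convexf mug (fconj g) ->
  is_prox (fconj g) b^-1 (yd + b^-1 *: u) y0 -> fconj g y0 = gy%:E ->
  (gbeta g b u' yd <= (dotp u' y0 - gy - b / 2 * nsq (y0 - yd)
                         + (2 * (b + mug))^-1 * nsq (u' - u))%:E)%E.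
Proof.
move=> b0 mug0 hsc hp hy0; apply: ge_ereal_sup => _ [y' _ <-].
case hy': (fconj g y') (prox_gtNy hp hy0 y') => [r| |] //= _; last by rewrite leNye.
have binv0 : 0 <= b^-1 by rewrite invr_ge0 ltW.
have := prox_three_point mug0 binv0 hsc hp hy0 hy'.
have bmug : 0 < b + mug by lra.
have := young (u' - u) (y' - y0) bmug.
rewrite invrK -!EFinB lee_fin.
have [dl ->] : exists dl, y' = y0 + dl by exists (y' - y0); rewrite addrC subrK.
rewrite [y0 + dl - y0]addrC addKr.
have -> : y0 + dl - yd = (y0 - yd) + dl by rewrite addrAC.
have -> : b * dotp (yd + b^-1 *: u - y0) dl = dotp u dl - b * dotp (y0 - yd) dl.
  by rewrite !(dotpBl, dotpDl, dotpZl, dotpNl); field; rewrite gt_eqF.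
rewrite (nsqD (y0 - yd)) dotpDr (_ : dotp u' dl = dotp u dl + dotp (u' - u) dl); last first.
  by rewrite dotpBl addrC subrK.
have := nsq_ge0 dl; lra.
Qed.

End SmoothedConjugate.

Lemma quad_form_ge0 (R : realType) d (a b c : R) (e u : 'cV[R]_d) :
  0 <= a -> 0 <= c -> b ^+ 2 <= a * c ->
  0 <= a * nsq e + 2 * b * dotp e u + c * nsq u.
Proof.
move=> a0 c0 bac; have [a_eq0|a_neq0] := eqVneq a 0.
  rewrite a_eq0 mul0r in bac *.
  have -> : b = 0 by apply/eqP; rewrite -sqrf_eq0 eq_le bac sqr_ge0.
  by rewrite mul0r mulr0 mul0r !add0r mulr_ge0 ?nsq_ge0.
have ap : 0 < a by rewrite lt_neqAle eq_sym a_neq0.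
rewrite -(pmulr_rge0 _ ap).
have := nsq_ge0 (a *: e + b *: u); rewrite nsqD !nsqZ dotpZl dotpZr.
have := nsq_ge0 u; nra.
Qed.

(* With A = L_(k-1) + mu_f, this is the denominator
   tau_(k-1)^2 + m_(k+1) tau_k of the extrapolation weight eta_(k+1). *)
Definition momentum_denom (R : fieldType) (L A mu t t' : R) : R :=
  t' ^+ 2 + (L + mu) / A * t.

(* The scalar conditions of the theorem, with t = tau_k, t' = tau_(k-1),
   L = L_k and A = L_(k-1) + mu_f, make the quadratic form of the momentum
   estimate below positive semidefinite. *)
Section MomentumCoefficients.
Variables (R : realFieldType) (L A mu t t' : R).
Hypotheses (t0 : 0 < t) (t1 : t <= 1) (t'0 : 0 < t') (mu0 : 0 <= mu)
  (L0 : 0 < L) (A0 : 0 < A).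
Hypothesis cond1 : A * (1 - t) * t' ^+ 2 + mu * (1 - t) * t >= L * t ^+ 2.
Hypothesis cond2 : A * (L + mu) * t * t' ^+ 2 + (L + mu) ^+ 2 * t ^+ 2 >= A * L * t' ^+ 2.

Let D := momentum_denom L A mu t t'.
Let al := t * D - t' ^+ 2.

Lemma momentum_D_gt0 : 0 < D.
Proof.
have : 0 <= (L + mu) / A * t.
  by rewrite !mulr_ge0 ?invr_ge0 ?addr_ge0 // ltW.
have : 0 < t' ^+ 2 by rewrite exprn_gt0.
rewrite /D /momentum_denom; lra.
Qed.

(* Both factors of this product are nonnegative: they are the slacks of
   the first and (up to 1/A) the second condition. *)
Lemma momentum_key : 0 <= (mu * t - A * al) * ((L + mu) * al + mu * t' ^+ 2).
Proof.
have An : A != 0 by rewrite gt_eqF.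
have -> : mu * t - A * al = A * (1 - t) * t' ^+ 2 + mu * (1 - t) * t - L * t ^+ 2.
  by rewrite /al /D /momentum_denom; field.
have -> : (L + mu) * al + mu * t' ^+ 2 =
   (A * (L + mu) * t * t' ^+ 2 + (L + mu) ^+ 2 * t ^+ 2 - A * L * t' ^+ 2) / A.
  by rewrite /al /D /momentum_denom; field.
by rewrite mulr_ge0 ?divr_ge0 ?subr_ge0 // ltW.
Qed.

(* The coefficients a, c and b of the quadratic form in (e, u) obtained
   from the momentum estimate after multiplication by D^2: a, c >= 0 and
   b^2 <= a c. *)
Lemma momentum_coef_a : 0 <= mu * t * (1 - t) * D ^+ 2 - L * al ^+ 2.
Proof.
rewrite -(pmulr_lge0 _ A0).
have -> : (mu * t * (1 - t) * D ^+ 2 - L * al ^+ 2) * A =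
    (mu * t - A * al) * ((L + mu) * al + mu * t' ^+ 2) + mu * t * L * t' ^+ 2.
  by rewrite /al /D /momentum_denom; field; rewrite gt_eqF.
by rewrite addr_ge0 ?momentum_key // mulr_ge0 ?sqr_ge0 // mulr_ge0 ?mulr_ge0 // ltW.
Qed.

Lemma momentum_coef_c : 0 <= (1 - t) * A * t' ^+ 2 * D ^+ 2 - L * t' ^+ 4.
Proof.
have An : A != 0 by rewrite gt_eqF.
have -> : (1 - t) * A * t' ^+ 2 * D ^+ 2 - L * t' ^+ 4 =
    t' ^+ 2 * ((1 - t) * A * D ^+ 2 - L * t' ^+ 2) by ring.
rewrite mulr_ge0 ?sqr_ge0 //.
have [al0|al_lt0] := leP 0 al.
  have -> : (1 - t) * A * D ^+ 2 - L * t' ^+ 2 =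
      D * (A * (1 - t) * t' ^+ 2 + mu * (1 - t) * t - L * t ^+ 2) + L * al.
    by rewrite /al /D /momentum_denom; field.
  apply: addr_ge0; last exact: mulr_ge0 (ltW L0) al0.
  by apply: mulr_ge0; [exact: ltW momentum_D_gt0 | rewrite subr_ge0].
have mup : 0 < mu.
  have f1 : 0 < mu * t - A * al.
    have : A * al < 0 by rewrite pmulr_rlt0.
    have : 0 <= mu * t by rewrite mulr_ge0 // ltW.
    lra.
  have := momentum_key; rewrite pmulr_rge0 // lt_neqAle mu0 andbT.
  apply: contraTneq => <-; rewrite mul0r addr0 -ltNge addr0 pmulr_rlt0 //.
rewrite -(pmulr_rge0 _ (mulr_gt0 mup t0)).
have -> : mu * t * ((1 - t) * A * D ^+ 2 - L * t' ^+ 2) =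
    (mu * t - A * al) * ((L + mu) * al + mu * t' ^+ 2) + L * A * al ^+ 2.
  by rewrite /al /D /momentum_denom; field.
by rewrite addr_ge0 ?momentum_key // mulr_ge0 ?sqr_ge0 // mulr_ge0 // ltW.
Qed.

Lemma momentum_coef_det :
  (- (L * al * t' ^+ 2)) ^+ 2 <=
    (mu * t * (1 - t) * D ^+ 2 - L * al ^+ 2) *
    ((1 - t) * A * t' ^+ 2 * D ^+ 2 - L * t' ^+ 4).
Proof.
rewrite -subr_ge0.
have -> : (mu * t * (1 - t) * D ^+ 2 - L * al ^+ 2) *
    ((1 - t) * A * t' ^+ 2 * D ^+ 2 - L * t' ^+ 4) - (- (L * al * t' ^+ 2)) ^+ 2 =
    t' ^+ 2 * (1 - t) * D ^+ 2 *
    ((mu * t - A * al) * ((L + mu) * al + mu * t' ^+ 2)).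
  have -> : (mu * t - A * al) * ((L + mu) * al + mu * t' ^+ 2) =
      mu * t * (1 - t) * A * D ^+ 2 - mu * t * L * t' ^+ 2 - L * A * al ^+ 2.
    by rewrite /al /D /momentum_denom; field; rewrite gt_eqF.
  by ring.
by rewrite mulr_ge0 ?momentum_key // mulr_ge0 ?sqr_ge0 // mulr_ge0 ?sqr_ge0 ?subr_ge0.
Qed.

End MomentumCoefficients.

(* Momentum estimate: with D = momentum_denom L A mu t t', the vector
   (t - t'^2/D) e + (t'^2/D) u, which will be w - xhat^k, satisfies
   L |.|^2 <= mu t (1 - t) |e|^2 + (1 - t) A t'^2 |u|^2. *)
Lemma momentum_estimate (R : realType) d (L A mu t t' : R) (e u : 'cV[R]_d) :
  0 < t <= 1 -> 0 < t' <= 1 -> 0 <= mu -> 0 < L -> 0 < A ->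
  A * (1 - t) * t' ^+ 2 + mu * (1 - t) * t >= L * t ^+ 2 ->
  A * (L + mu) * t * t' ^+ 2 + (L + mu) ^+ 2 * t ^+ 2 >= A * L * t' ^+ 2 ->
  L * nsq ((t - t' ^+ 2 / momentum_denom L A mu t t') *: e
           + (t' ^+ 2 / momentum_denom L A mu t t') *: u)
   <= mu * t * (1 - t) * nsq e + (1 - t) * A * t' ^+ 2 * nsq u.
Proof.
move=> /andP[t0 t1] /andP[t'0 _] mu0 Lp Ap cond1 cond2.
set D := momentum_denom L A mu t t'.
have D0 : 0 < D := momentum_D_gt0 t0 t'0 mu0 Lp Ap.
have := quad_form_ge0 e u (momentum_coef_a t0 mu0 Lp Ap cond1 cond2)
  (momentum_coef_c t0 t'0 mu0 Lp Ap cond1 cond2) (momentum_coef_det t1 Ap cond1 cond2).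
rewrite -/D => hq.
rewrite -subr_ge0 -(pmulr_rge0 _ (exprn_gt0 2 D0)) nsqD !nsqZ dotpZl dotpZr.
move: (nsq e) (nsq u) (dotp e u) hq => E U G hq.
have Dn : D != 0 by rewrite gt_eqF.
suff -> : D ^+ 2 * (mu * t * (1 - t) * E + (1 - t) * A * t' ^+ 2 * U -
    L * ((t - t' ^+ 2 / D) ^+ 2 * E + 2 * ((t - t' ^+ 2 / D) * ((t' ^+ 2 / D) * G)) +
     (t' ^+ 2 / D) ^+ 2 * U)) =
   (mu * t * (1 - t) * D ^+ 2 - L * (t * D - t' ^+ 2) ^+ 2) * E
   + 2 * - (L * (t * D - t' ^+ 2) * t' ^+ 2) * G
   + ((1 - t) * A * t' ^+ 2 * D ^+ 2 - L * t' ^+ 4) * U by [].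
by field.
Qed.

Lemma opnorm_gt0 (R : realType) n p (K : 'M[R]_(n, p)) nK :
  K != 0 -> is_opnorm K nK -> 0 < nK.
Proof.
move=> K_neq0 [nK0 [bound _]]; rewrite lt_neqAle nK0 andbT eq_sym.
apply: contra K_neq0 => /eqP nK_eq0; apply/eqP/matrixP => i j; rewrite mxE.
have := bound (delta_mx j 0); rewrite nK_eq0 expr2 !mul0r => Ke0.
apply/eqP; rewrite -sqrf_eq0 eq_le sqr_ge0 andbT (le_trans _ Ke0) //.
by have := nsq_ge_coord (K *m delta_mx j 0) i; rewrite -colE mxE.
Qed.

Section Scheme.
Variables (R : realType) (p n : nat).
Variables (f : 'cV[R]_p -> \bar R) (g : 'cV[R]_n -> \bar R) (K : 'M[R]_(n, p)).
Variables (nK muf mug b0 : R) (tau : nat -> R) (yd : 'cV[R]_n).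
Variables (x xh : nat -> 'cV[R]_p) (y yt : nat -> 'cV[R]_n).
Hypotheses (f_proper : properf f) (g_proper : properf g).
Hypotheses (K_neq0 : K != 0) (K_opnorm : is_opnorm K nK).
Hypotheses (muf0 : 0 <= muf) (mug0 : 0 <= mug).
Hypotheses (f_sc : strongly_convexf muf f) (gconj_sc : strongly_convexf mug (fconj g)).
Hypotheses (b0_gt0 : 0 < b0) (tau_in : forall j, 0 < tau j <= 1).
Hypothesis gconj_yt0 : (fconj g (yt 0%N) < +oo)%E.
Hypothesis y_prox : forall j, is_prox (fconj g) (betak b0 tau j)^-1
  (yd + (betak b0 tau j)^-1 *: (K *m xh j)) (y j.+1).
Hypothesis x_prox : forall j, is_prox f (Lk nK mug b0 tau j)^-1
  (xh j - (Lk nK mug b0 tau j)^-1 *: (K^T *m y j.+1)) (x j.+1).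
Hypothesis xh_next : forall j,
  xh j.+1 = x j.+1 + eta_next nK muf mug b0 tau j *: (x j.+1 - x j).
Hypothesis yt_next : forall j, yt j.+1 = (1 - tau j) *: yt j + tau j *: y j.+1.

Local Notation beta := (betak b0 tau).
Local Notation Lc := (Lk nK mug b0 tau).

Lemma beta_gt0 j : 0 < beta j.
Proof.
elim: j => [|j IH] //=; have /andP[t0 _] := tau_in j.+1.
by rewrite divr_gt0 // addr_gt0.
Qed.

Lemma beta_next_ge j : (1 - tau j.+1) * beta j <= beta j.+1.
Proof.
have /andP[t0 _] := tau_in j.+1; have := beta_gt0 j.
by rewrite /= ler_pdivlMr ?addr_gt0 // => ?; nra.
Qed.

Lemma Lc_gt0 j : 0 < Lc j.
Proof.
have bm : 0 < beta j + mug by have := beta_gt0 j; have := mug0; lra.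
by rewrite divr_gt0 ?exprn_gt0 ?(opnorm_gt0 K_neq0 K_opnorm).
Qed.

(* L_j bounds the curvature of the smoothed term u |-> g_(beta_j)(K u, yd). *)
Lemma Lc_opnorm j v : (2 * (beta j + mug))^-1 * nsq (K *m v) <= Lc j / 2 * nsq v.
Proof.
have bm : 0 < beta j + mug by have := beta_gt0 j; have := mug0; lra.
have -> : Lc j / 2 = (2 * (beta j + mug))^-1 * nK ^+ 2.
  by rewrite /Lk; field; rewrite gt_eqF.
rewrite -mulrA; apply: ler_wpM2l; first by rewrite invr_ge0 mulr_ge0 // ltW.
by case: K_opnorm => _ [].
Qed.

Lemma gconj_proper : properf (fconj g).
Proof. by split; [exists (yt 0%N) | move=> ?; exact: fconj_gtNy]. Qed.

Lemma x_fin j : f (x j.+1) \is a fin_num.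
Proof. by have [r ->] := prox_fin f_proper (x_prox j). Qed.

Lemma y_fin j : fconj g (y j.+1) \is a fin_num.
Proof. by have [r ->] := prox_fin gconj_proper (y_prox j). Qed.

Lemma yt_fin j : fconj g (yt j) \is a fin_num.
Proof.
elim: j => [|j IH]; first exact: proper_fin_num gconj_proper gconj_yt0.
apply: fin_num_le (fconj_gtNy _ g_proper) _; rewrite yt_next addrC.
exact: convex_ineq mug0 gconj_sc (tau_in j) (esym (fineK (y_fin j))) (esym (fineK IH)).
Qed.

Lemma gbeta_fin j : gbeta g (beta j) (K *m x j.+1) yd \is a fin_num.
Proof.
have gy := esym (fineK (y_fin j)).
apply: fin_num_le (gbeta_descent _ (beta_gt0 j) mug0 gconj_sc (y_prox j) gy).
apply: lt_le_trans (gbeta_ge _ _ _ _ (y j.+1)).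
by rewrite gy -!EFinB ltNyr.
Qed.

Definition Vreal j (xx : 'cV[R]_p) : R :=
  fine (f (x j.+1)) + fine (gbeta g (beta j) (K *m x j.+1) yd)
  - (fine (f xx) + dotp (K *m xx) (yt j.+1) - fine (fconj g (yt j.+1)))
  + (Lc j + muf) * tau j ^+ 2 / 2 *
      nsq ((tau j)^-1 *: (x j.+1 - (1 - tau j) *: x j) - xx).

Lemma Vly_real j xx : f xx \is a fin_num ->
  Vly f g K nK muf mug b0 tau yd x yt j.+1 xx = (Vreal j xx)%:E.
Proof.
move=> fxx; rewrite /Vly /Fbeta /lagr /=.
rewrite -(fineK (x_fin j)) -(fineK (gbeta_fin j)) -(fineK fxx) -(fineK (yt_fin j.+1)).
by rewrite -!(EFinD, EFinB).
Qed.

Lemma dual_upper j :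
  fine (gbeta g (beta j.+1) (K *m x j.+2) yd) <=
    dotp (K *m x j.+2) (y j.+2) - fine (fconj g (y j.+2))
    - beta j.+1 / 2 * nsq (y j.+2 - yd) + Lc j.+1 / 2 * nsq (x j.+2 - xh j.+1).
Proof.
rewrite -lee_fin fineK ?gbeta_fin //.
apply: le_trans (gbeta_descent _ (beta_gt0 j.+1) mug0 gconj_sc (y_prox j.+1)
  (esym (fineK (y_fin j.+1)))) _.
by rewrite lee_fin lerD2l -mulmxBr Lc_opnorm.
Qed.

Lemma dual_lower j :
  dotp (K *m x j.+1) (y j.+2) - fine (fconj g (y j.+2)) - beta j / 2 * nsq (y j.+2 - yd)
    <= fine (gbeta g (beta j) (K *m x j.+1) yd).
Proof. by rewrite -lee_fin fineK ?gbeta_fin // !EFinB fineK ?y_fin // gbeta_ge. Qed.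

Lemma dual_average j :
  fine (fconj g (yt j.+2)) <=
    tau j.+1 * fine (fconj g (y j.+2)) + (1 - tau j.+1) * fine (fconj g (yt j.+1)).
Proof.
rewrite -lee_fin fineK ?yt_fin // [yt j.+2]yt_next addrC.
exact: convex_ineq mug0 gconj_sc (tau_in j.+1) (esym (fineK (y_fin j.+1)))
  (esym (fineK (yt_fin j.+1))).
Qed.

Lemma primal_step j z : f z \is a fin_num ->
  fine (f (x j.+2)) + dotp (K *m x j.+2) (y j.+2) + Lc j.+1 / 2 * nsq (x j.+2 - xh j.+1)
    + (Lc j.+1 + muf) / 2 * nsq (z - x j.+2)
  <= fine (f z) + dotp (K *m z) (y j.+2) + Lc j.+1 / 2 * nsq (z - xh j.+1).
Proof.
move=> fz; rewrite !dotp_mulmx ![dotp _ (K^T *m _)]dotpC.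
exact: prox_grad_step muf0 (Lc_gt0 j.+1) f_sc (x_prox j.+1)
  (esym (fineK (x_fin j.+1))) (esym (fineK fz)).
Qed.

Lemma primal_average j xx : f xx \is a fin_num ->
  f (tau j.+1 *: xx + (1 - tau j.+1) *: x j.+1) \is a fin_num /\
  fine (f (tau j.+1 *: xx + (1 - tau j.+1) *: x j.+1)) <=
    tau j.+1 * fine (f xx) + (1 - tau j.+1) * fine (f (x j.+1))
    - muf / 2 * (tau j.+1 * (1 - tau j.+1)) * nsq (xx - x j.+1).
Proof.
move=> fxx; have hconv := strong_convex_ineq f_sc (tau_in j.+1) (esym (fineK fxx))
  (esym (fineK (x_fin j))).
have fw := fin_num_le (proj2 f_proper _) hconv.
by split=> //; rewrite -lee_fin fineK.
Qed.

(* The extrapolation xhat^k is designed so that w - xhat^k, for the comparison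
   point w = tau_k xx + (1 - tau_k) x^k, is controlled by the momentum estimate. *)
Lemma momentum_bound j xx :
  (Lc j + muf) * (1 - tau j.+1) * tau j ^+ 2 + muf * (1 - tau j.+1) * tau j.+1
    >= Lc j.+1 * tau j.+1 ^+ 2 ->
  (Lc j + muf) * (Lc j.+1 + muf) * tau j.+1 * tau j ^+ 2
    + (Lc j.+1 + muf) ^+ 2 * tau j.+1 ^+ 2 >= (Lc j + muf) * Lc j.+1 * tau j ^+ 2 ->
  Lc j.+1 / 2 * nsq (tau j.+1 *: xx + (1 - tau j.+1) *: x j.+1 - xh j.+1)
    - muf / 2 * (tau j.+1 * (1 - tau j.+1)) * nsq (xx - x j.+1)
  <= (1 - tau j.+1) * ((Lc j + muf) * tau j ^+ 2 / 2 *
        nsq ((tau j)^-1 *: (x j.+1 - (1 - tau j) *: x j) - xx)).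
Proof.
move=> cond1 cond2.
have /andP[t0 _] := tau_in j.+1; have /andP[t'0 _] := tau_in j.
have A0 : 0 < Lc j + muf by have := Lc_gt0 j; have := muf0; lra.
set D := momentum_denom (Lc j.+1) (Lc j + muf) muf (tau j.+1) (tau j).
have D0 : 0 < D := momentum_D_gt0 t0 t'0 muf0 (Lc_gt0 j.+1) A0.
have -> : tau j.+1 *: xx + (1 - tau j.+1) *: x j.+1 - xh j.+1 =
    - ((tau j.+1 - tau j ^+ 2 / D) *: (x j.+1 - xx)
       + (tau j ^+ 2 / D) *: ((tau j)^-1 *: (x j.+1 - (1 - tau j) *: x j) - xx)).
  rewrite xh_next /eta_next (_ : tau j ^+ 2 + m_next nK muf mug b0 tau j * tau j.+1 = D) //.
  apply/matrixP => a b; rewrite !mxE.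
  by field; rewrite !gt_eqF.
have := momentum_estimate (x j.+1 - xx) ((tau j)^-1 *: (x j.+1 - (1 - tau j) *: x j) - xx)
  (tau_in j.+1) (tau_in j) muf0 (Lc_gt0 j.+1) A0 cond1 cond2.
rewrite -/D nsqN -(nsqN (xx - x j.+1)) opprB; lra.
Qed.

(* The gain term of the primal step is the quadratic term of V_(k+1). *)
Lemma dist_next j xx :
  (Lc j.+1 + muf) / 2 * nsq (tau j.+1 *: xx + (1 - tau j.+1) *: x j.+1 - x j.+2) =
  (Lc j.+1 + muf) * tau j.+1 ^+ 2 / 2 *
    nsq ((tau j.+1)^-1 *: (x j.+2 - (1 - tau j.+1) *: x j.+1) - xx).
Proof.
have /andP[t0 _] := tau_in j.+1.
have -> : tau j.+1 *: xx + (1 - tau j.+1) *: x j.+1 - x j.+2 =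
    - (tau j.+1 *: ((tau j.+1)^-1 *: (x j.+2 - (1 - tau j.+1) *: x j.+1) - xx)).
  by apply/matrixP => a b; rewrite !mxE; field; rewrite gt_eqF.
by rewrite nsqN nsqZ; ring.
Qed.

(* One step of the scheme in real numbers: V_(k+1) <= (1 - tau_k) V_k, k = j + 1. *)
Lemma descent_real j xx : f xx \is a fin_num ->
  (Lc j + muf) * (1 - tau j.+1) * tau j ^+ 2 + muf * (1 - tau j.+1) * tau j.+1
    >= Lc j.+1 * tau j.+1 ^+ 2 ->
  (Lc j + muf) * (Lc j.+1 + muf) * tau j.+1 * tau j ^+ 2
    + (Lc j.+1 + muf) ^+ 2 * tau j.+1 ^+ 2 >= (Lc j + muf) * Lc j.+1 * tau j ^+ 2 ->
  Vreal j.+1 xx <= (1 - tau j.+1) * Vreal j xx.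
Proof.
move=> fxx cond1 cond2; have /andP[_ t1] := tau_in j.+1.
have [fw primal_avg] := primal_average j fxx.
have primal := primal_step j fw.
have mom := momentum_bound xx cond1 cond2.
have dist := dist_next j xx.
have dual1 := dual_upper j.
have t_compl : 0 <= 1 - tau j.+1 by rewrite subr_ge0.
have dual0 := ler_wpM2l t_compl (dual_lower j).
have dual_avg := dual_average j.
have half_N : 0 <= nsq (y j.+2 - yd) / 2 by rewrite divr_ge0 ?nsq_ge0.
have beta_dec := ler_wpM2r half_N (beta_next_ge j).
have Kw : dotp (K *m (tau j.+1 *: xx + (1 - tau j.+1) *: x j.+1)) (y j.+2) =
    tau j.+1 * dotp (K *m xx) (y j.+2) + (1 - tau j.+1) * dotp (K *m x j.+1) (y j.+2).
  by rewrite mulmxDr -!scalemxAr dotpDl !dotpZl.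
have Kyt : dotp (K *m xx) (yt j.+2) =
    (1 - tau j.+1) * dotp (K *m xx) (yt j.+1) + tau j.+1 * dotp (K *m xx) (y j.+2).
  by rewrite yt_next dotpDr !dotpZr.
rewrite Kw dist in primal; rewrite /Vreal Kyt; lra.
Qed.

End Scheme.

Theorem lemma3 (R : realType) (p n : nat)
  (f : 'cV[R]_p -> \bar R) (g : 'cV[R]_n -> \bar R) (K : 'M[R]_(n, p))
  (nK muf mug b0 : R) (tau : nat -> R) (yd : 'cV[R]_n)
  (x xh : nat -> 'cV[R]_p) (y yt : nat -> 'cV[R]_n) (k : nat) :
  properf f -> lscf f -> convexf f ->
  properf g -> lscf g -> convexf g ->
  K != 0 -> is_opnorm K nK ->
  0 <= muf -> 0 <= mug ->
  strongly_convexf muf f -> strongly_convexf mug (fconj g) ->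
  0 < b0 -> (forall j, 0 < tau j <= 1) ->
  (f (x 0%N) < +oo)%E -> (fconj g (yt 0%N) < +oo)%E ->
  xh 0%N = x 0%N ->
  (forall j, is_prox (fconj g) (betak b0 tau j)^-1
               (yd + (betak b0 tau j)^-1 *: (K *m xh j)) (y j.+1)) ->
  (forall j, is_prox f (Lk nK mug b0 tau j)^-1
               (xh j - (Lk nK mug b0 tau j)^-1 *: (K^T *m y j.+1)) (x j.+1)) ->
  (forall j, xh j.+1 = x j.+1 + eta_next nK muf mug b0 tau j *: (x j.+1 - x j)) ->
  (forall j, yt j.+1 = (1 - tau j) *: yt j + tau j *: y j.+1) ->
  (1 <= k)%N ->
  (Lk nK mug b0 tau k.-1 + muf) * (1 - tau k) * tau k.-1 ^+ 2
    + muf * (1 - tau k) * tau k >= Lk nK mug b0 tau k * tau k ^+ 2 ->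
  (Lk nK mug b0 tau k.-1 + muf) * (Lk nK mug b0 tau k + muf) * tau k * tau k.-1 ^+ 2
    + (Lk nK mug b0 tau k + muf) ^+ 2 * tau k ^+ 2
    >= (Lk nK mug b0 tau k.-1 + muf) * Lk nK mug b0 tau k * tau k.-1 ^+ 2 ->
  forall xx : 'cV[R]_p, (f xx < +oo)%E ->
    (Vly f g K nK muf mug b0 tau yd x yt k.+1 xx
       <= (1 - tau k)%R%:E * Vly f g K nK muf mug b0 tau yd x yt k xx)%E.
Proof.
move=> f_proper _ _ g_proper _ _ K_neq0 K_opnorm muf0 mug0 f_sc gconj_sc b0_gt0
  tau_in _ gconj_yt0 _ y_prox x_prox xh_next yt_next.
case: k => [//|j] _ cond1 cond2 xx /(proper_fin_num f_proper) fxx.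
have V_real := Vly_real muf f_proper g_proper mug0 gconj_sc b0_gt0 tau_in gconj_yt0
  y_prox x_prox yt_next.
rewrite !V_real // -EFinM lee_fin.
exact: (descent_real f_proper g_proper K_neq0 K_opnorm muf0 mug0 f_sc gconj_sc b0_gt0
  tau_in gconj_yt0 y_prox x_prox xh_next yt_next fxx cond1 cond2).
Qed.
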